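(* Let $\mu$ be an absolutely continuous probability measure on $\mathbb{R}^d$ with density $f_\mu$ satisfying (B1), (B2) and (B3) below. Then there is a constant $C>0$ (independent of $\mathbf g,\mathbf g'$ and $i$) such that for all $\mathbf g,\mathbf g'\in\mathbb{R}^M$ and all $i\in\{1,\dots,M\}$, $$\mu\big(\mathbb L_i(\mathbf g)\setminus\mathbb L_i(\mathbf g')\big)\le C\,M\,\|\mathbf g-\mathbf g'\|_\infty .$$
   Context: $\nu=\sum_{i=1}^Mw_i\delta_{y_i}$ with distinct $y_i\in\mathbb{R}^d$, $w_i>0$, $\sum w_i=1$, $w_{\min}=\min w_i$. (PW): a probability measure $\rho$ satisfies it if $\exists C_{pw}$ with $\|f-\mathbb{E}_\rho f\|_{L^1(\rho)}\le C_{pw}\|\nabla f\|_{L^1(\rho)}$ for all $f\in C^1(\mathbb{R}^d)$. (B1): the cost is $c(x,y)=\frac12\|x-y\|^2$ and $\mu$ has finite second moment. (B2): there is a compact $K'$ with $\mu(K')\ge1-\frac14w_{\min}$ such that the probability measure with density $f_\mu\mathbf 1_{K'}/\mu(K')$ satisfies (PW). (B3): with $f_\mu^{R+0}=f_\mu\mathbf 1_{\{\|x\|\le R\}}$, $f_\mu^{R+r}=f_\mu\mathbf 1_{\{R+r-2\le\|x\|\le R+r\}}$ for $r\ge1$, $C_{f_\mu}^{R+r}=\sup f_\mu^{R+r}$, $\omega_{f_\mu}^{R+r}$ the modulus of continuity of $f_\mu^{R+r}$: there exist $R>1$, $C>0$, a modulus $\omega$ with $\sum_{r\ge0}(R+r)^{d-1}\omega_{f_\mu}^{R+r}(\delta)\le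 C\omega(\delta)$ $\forall\delta>0$ and $\sum_{r\ge0}(R+r)^{d-1}C_{f_\mu}^{R+r}<\infty$. $\mathbf g^c(x)=\min_i\{c(x,y_i)-g_i\}$; Laguerre cells $\mathbb L_j(\mathbf g)=\{x:\mathbf g^c(x)=c(x,y_j)-g_j\}$. *)

From HB Require Import structures.
From mathcomp Require Import all_boot all_order all_algebra.
From mathcomp Require Import all_classical all_reals all_analysis.
Set Implicit Arguments. Unset Strict Implicit. Unset Printing Implicit Defensive.
Import Order.TTheory GRing.Theory Num.Theory.
Import numFieldNormedType.Exports.
Local Open Scope classical_set_scope.
Local Open Scope ring_scope.

(* R^d is represented by row vectors 'rV[R]_d (normed/topological     *)
(* structure from MathComp-Analysis).  We equip it with the product   *)
(* (= Borel) sigma-algebra generated by the coordinate maps.          *)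
Section rV_measurable.
Context {R : realType} (n : nat).
Let coord : 'I_n -> 'rV[R]_n -> R := fun i x => x ord0 i.

Let rV_set0 : g_sigma_preimage coord set0.
Proof. exact: sigma_algebra0. Qed.
Let rV_setC A : g_sigma_preimage coord A -> g_sigma_preimage coord (~` A).
Proof. exact: sigma_algebraC. Qed.
Let rV_bigcup (F : _^nat) : (forall i, g_sigma_preimage coord (F i)) ->
  g_sigma_preimage coord (\bigcup_i (F i)).
Proof. exact: sigma_algebra_bigcup. Qed.

HB.instance Definition _ := @isMeasurable.Build default_measure_display
  'rV[R]_n (g_sigma_preimage coord) rV_set0 rV_setC rV_bigcup.
End rV_measurable.

Section Defs.
Context {R : realType} {d : nat}.

Definition enorm (x : 'rV[R]_d) : R := Num.sqrt (\sum_(i < d) x ord0 i ^+ 2).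

Definition box (a b : 'rV[R]_d) : set 'rV[R]_d :=
  [set x | forall i, a ord0 i <= x ord0 i <= b ord0 i].

(* lam is (the Borel restriction of) the Lebesgue measure on R^d:
   it gives every closed box its volume; this determines it uniquely. *)
Definition is_lebesgue (lam : {measure set 'rV[R]_d -> \bar R}) : Prop :=
  forall a b : 'rV[R]_d, (forall i, a ord0 i <= b ord0 i) ->
    lam (box a b) = (\prod_(i < d) (b ord0 i - a ord0 i))%:E.

Definition dmeasure (lam : {measure set 'rV[R]_d -> \bar R}) (f : 'rV[R]_d -> R)
  (A : set 'rV[R]_d) : \bar R := (\int[lam]_(x in A) (f x)%:E)%E.

Definition is_density (lam : {measure set 'rV[R]_d -> \bar R}) (f : 'rV[R]_d -> R) :=
  measurable_fun setT f /\ (forall x, 0 <= f x) /\ dmeasure lam f setT = 1%E.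

Definition basis_vec (i : 'I_d) : 'rV[R]_d := delta_mx ord0 i.
Definition grad (g : 'rV[R]_d -> R) (x : 'rV[R]_d) : 'rV[R]_d :=
  \row_i ('D_(basis_vec i) g x).

Definition C1 (g : 'rV[R]_d -> R) : Prop :=
  forall i, (forall x, derivable g x (basis_vec i)) /\
            continuous (fun x => 'D_(basis_vec i) g x).

(* (PW) for the probability measure rho with density f 1_K / mu(K):
   || g - E_rho g ||_{L^1(rho)} <= C_pw || grad g ||_{L^1(rho)} *)
Definition PW_restricted (lam : {measure set 'rV[R]_d -> \bar R}) (f : 'rV[R]_d -> R)
  (K : set 'rV[R]_d) : Prop :=
  let mK := Rintegral lam K f in
  let rho_int (h : 'rV[R]_d -> R) := Rintegral lam K (fun x => h x * f x / mK) in
  exists Cpw : R, forall g : 'rV[R]_d -> R, C1 g ->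
    rho_int (fun x => `|g x - rho_int g|) <= Cpw * rho_int (fun x => enorm (grad g x)).

Definition cost (x y : 'rV[R]_d) : R := (enorm (x - y)) ^+ 2 / 2.

(* g^c(x) = min_j { c(x,y_j) - g_j }  (computed in \bar R; M >= 1 in use) *)
Definition ctransform (M : nat) (y : 'I_M -> 'rV[R]_d) (g : 'I_M -> R)
  (x : 'rV[R]_d) : \bar R :=
  (\big[Order.min/+oo]_(j < M) ((cost x (y j) - g j)%:E))%E.

Definition laguerre (M : nat) (y : 'I_M -> 'rV[R]_d) (g : 'I_M -> R) (i : 'I_M) :
  set 'rV[R]_d := [set x | ctransform y g x = (cost x (y i) - g i)%:E].

Definition supnorm (M : nat) (g : 'I_M -> R) : R := \big[Num.max/0]_(i < M) `|g i|.

(* w_min (weights are in (0,1], so the neutral 1 is harmless) *)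
Definition wmin (M : nat) (w : 'I_M -> R) : R := \big[Num.min/1]_(i < M) w i.

Definition f_piece (f : 'rV[R]_d -> R) (Rr : R) (r : nat) (x : 'rV[R]_d) : R :=
  if r == 0%N then (if enorm x <= Rr then f x else 0)
  else (if (Rr + r%:R - 2 <= enorm x) && (enorm x <= Rr + r%:R) then f x else 0).

Definition sup_fun (h : 'rV[R]_d -> R) : \bar R := ereal_sup (range (fun x => (h x)%:E)).

Definition modcont (h : 'rV[R]_d -> R) (delta : R) : \bar R :=
  ereal_sup [set e | exists x z : 'rV[R]_d, enorm (x - z) <= delta /\ e = (`|h x - h z|)%:E].

End Defs.

Definition is_modulus {R : realType} (om : R -> R) : Prop :=
  (forall t, 0 < t -> 0 <= om t) /\
  (forall s t, 0 < s -> s <= t -> om s <= om t) /\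
  (om @ at_right 0 --> 0).

From HB Require Import structures.
From mathcomp Require Import all_boot all_order all_algebra.
From mathcomp Require Import all_classical all_reals all_analysis.
From mathcomp Require Import ring lra.
Import Order.TTheory GRing.Theory Num.Theory.
Import numFieldNormedType.Exports measurable_realfun.
Local Open Scope classical_set_scope.
Local Open Scope ring_scope.

(* If x lies in L_i(g) but not in L_i(g'), some j satisfies
   c(x,y_i) - g_i <= c(x,y_j) - g_j and c(x,y_j) - g'_j < c(x,y_i) - g'_i.  Since
   c(x,y_i) - c(x,y_j) = <y_j - y_i, x> + const, x lies in a slab of width at most
   2 |g - g'|_oo with normal v = y_j - y_i, which is nonzero as the y's are distinct.
   Knowing only the volumes of boxes, the Lebesgue measure of a slab of width w inside
   a box is at most (volume of the face orthogonal to e_k) * w / |v_k|: enclose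
   slab /\ box in a box whose k-th side is (w + spread) / |v_k|, then bisect along the
   direction of largest spread until the spread term vanishes.  In the cube of side
   2 (R + r) this is O((R + r)^(d-1) w), and the summable shell suprema of (B3)
   dominate f, so mu(slab) = O(w). *)

Section rV_geometry.
Context {R : realType} {d : nat}.
Local Notation V := 'rV[R]_d.

Definition dotv (v x : V) : R := \sum_(l < d) v ord0 l * x ord0 l.

Definition slab (v : V) (a b : R) : set V := [set x | a < dotv v x <= b].

Definition cube (r : R) : set V := box (const_mx (- r)) (const_mx r).

Definition set_coord (x : V) (l : 'I_d) (c : R) : V :=
  \row_j (if j == l then c else x ord0 j).

Lemma set_coord_id (x : V) l : set_coord x l (x ord0 l) = x.
Proof. by apply/rowP => j; rewrite !mxE; case: eqVneq => [->|]. Qed.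

Lemma set_coordB (p q : V) l s t :
  set_coord q l t - set_coord p l s = set_coord (q - p) l (t - s).
Proof. by apply/rowP => j; rewrite !mxE; case: ifP. Qed.

Lemma prod_set_coord (P : pred 'I_d) (x : V) l c : P l ->
  \prod_(j | P j) set_coord x l c ord0 j =
  c * \prod_(j | P j && (j != l)) x ord0 j.
Proof.
move=> Pl; rewrite (bigD1 l) //= mxE eqxx; congr (_ * _).
by apply: eq_bigr => j /andP[_ /negbTE jl]; rewrite mxE jl.
Qed.

Lemma sum_set_coord (P : pred 'I_d) (F : 'I_d -> R -> R) (x : V) l c : P l ->
  \sum_(j | P j) F j (set_coord x l c ord0 j) =
  F l c + \sum_(j | P j && (j != l)) F j (x ord0 j).
Proof.
move=> Pl; rewrite (bigD1 l) //= mxE eqxx; congr (_ + _).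
by apply: eq_bigr => j /andP[_ /negbTE jl]; rewrite mxE jl.
Qed.

Lemma box_split l c (p q : V) :
  box p q `<=` box p (set_coord q l c) `|` box (set_coord p l c) q.
Proof.
move=> x bx; have [xc|cx] := lerP (x ord0 l) c; [left|right] => j; rewrite mxE;
  case: eqVneq => [->|_]; rewrite ?bx //; have /andP[? ?] := bx l.
  by rewrite xc andbT.
by rewrite ltW.
Qed.

Lemma measurable_coord (i : 'I_d) : measurable_fun [set: V] (fun x : V => x ord0 i).
Proof.
move=> _ B mB; rewrite setTI; apply: sub_sigma_algebra.
have : i \in index_enum 'I_d by rewrite mem_index_enum.
elim: (index_enum 'I_d) => [//|j s IH]; rewrite inE big_cons => /orP[/eqP<-|/IH]; last first.
  by right.
by left; exists B => //; rewrite setTI.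
Qed.

Lemma measurable_dotv (v : V) : measurable_fun [set: V] (dotv v).
Proof.
apply: measurable_sum => l.
exact: measurable_funM (measurable_cst _) (measurable_coord l).
Qed.

Lemma measurable_box (p q : V) : measurable (box p q).
Proof.
have -> : box p q = \bigcap_(i in [set: 'I_d])
    ((fun x : V => x ord0 i) @^-1` `[p ord0 i, q ord0 i]).
  apply/seteqP; split => x /= h i; first by move=> _; rewrite /= in_itv; exact: h.
  by have := h i I; rewrite /= in_itv.
apply: fin_bigcap_measurable; first exact: finite_finset.
by move=> i _; rewrite -[X in measurable X]setTI; exact: measurable_coord.
Qed.

Lemma measurable_slab (v : V) a b : measurable (slab v a b).
Proof.
rewrite -[slab v a b]setTI.
have -> : slab v a b = dotv v @^-1` `]a, b] by apply/seteqP; split => x; rewrite /= in_itv.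
exact: measurable_dotv.
Qed.

Lemma enorm_sqr (x : V) : enorm x ^+ 2 = \sum_(l < d) x ord0 l ^+ 2.
Proof. by rewrite sqr_sqrtr // sumr_ge0 // => l _; exact: sqr_ge0. Qed.

Lemma enorm_ge0 (x : V) : 0 <= enorm x.
Proof. exact: sqrtr_ge0. Qed.

Lemma ler_coord_enorm (x : V) i : `|x ord0 i| <= enorm x.
Proof.
rewrite -sqrtr_sqr ler_wsqrtr // (bigD1 i) //= lerDl.
by apply: sumr_ge0 => j _; exact: sqr_ge0.
Qed.

Lemma enorm_le_cube (x : V) r : enorm x <= r -> cube r x.
Proof.
move=> xr i; rewrite !mxE -ler_norml.
exact: le_trans (ler_coord_enorm x i) xr.
Qed.

End rV_geometry.

Section slab_in_box.
Context {R : realType} {d : nat}.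
Local Notation V := 'rV[R]_d.
Variable lam : {measure set V -> \bar R}.
Hypothesis lam_box : is_lebesgue lam.
Variables (v : V) (k : 'I_d) (a b : R).
Hypothesis vk_neq0 : v ord0 k != 0.
Hypothesis le_ab : a <= b.

Definition face_volume (s : V) : R := \prod_(l < d | l != k) s ord0 l.

Definition face_spread (s : V) : R := \sum_(l < d | l != k) `|v ord0 l| * s ord0 l.

Definition slab_centre (p q : V) : R :=
  ((a + b) / 2 - \sum_(l < d | l != k) v ord0 l * ((p ord0 l + q ord0 l) / 2)) / v ord0 k.

Definition slab_box_bound (th : R) : Prop := forall p q : V,
  (forall l, p ord0 l <= q ord0 l) ->
  (lam (slab v a b `&` box p q) <=
     (face_volume (q - p) * (b - a + th * face_spread (q - p)) / `|v ord0 k|)%:E)%E.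

Let vk_gt0 : 0 < `|v ord0 k|. Proof. by rewrite normr_gt0. Qed.

Let d_gt0 : (0 < d)%N. Proof. exact: leq_ltn_trans (leq0n k) (ltn_ord k). Qed.

(* Halving the side l maximising |v_l| s_l removes at least face_spread s / (2d). *)
Let shrink : R := 1 - (2 * d%:R)^-1.

Let shrink_ge0 : 0 <= shrink.
Proof.
rewrite subr_ge0 invf_le1 ?mulr_gt0 ?ltr0n //.
have : (1 : R) <= d%:R by rewrite ler1n.
lra.
Qed.

Let shrink_lt1 : shrink < 1.
Proof. by rewrite ltrBlDr ltrDl invr_gt0 mulr_gt0 ?ltr0n. Qed.

Lemma lebesgue_box_sides (p q : V) : (forall l, p ord0 l <= q ord0 l) ->
  lam (box p q) = (\prod_(l < d) (q - p) ord0 l)%:E.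
Proof.
by move=> pq; rewrite lam_box //; congr EFin; apply: eq_bigr => l _; rewrite !mxE.
Qed.

Lemma face_volume_ge0 (s : V) : (forall l, 0 <= s ord0 l) -> 0 <= face_volume s.
Proof. by move=> s0; apply: prodr_ge0 => l _. Qed.

Lemma face_spread_ge0 (s : V) : (forall l, 0 <= s ord0 l) -> 0 <= face_spread s.
Proof. by move=> s0; apply: sumr_ge0 => l _; rewrite mulr_ge0. Qed.

Lemma face_volume_halve (s : V) l : l != k ->
  face_volume (set_coord s l (s ord0 l / 2)) = face_volume s / 2.
Proof. by move=> lk; rewrite /face_volume prod_set_coord // [in RHS](bigD1 l) //= mulrAC. Qed.

Lemma face_spread_halve (s : V) l : l != k ->
  face_spread (set_coord s l (s ord0 l / 2)) =
  face_spread s - `|v ord0 l| * s ord0 l / 2.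
Proof.
move=> lk; rewrite /face_spread (sum_set_coord _ (fun j c => `|v ord0 j| * c)) //.
rewrite [in RHS](bigD1 l) //=; by field.
Qed.

Lemma face_spread_max (s : V) : (forall l, 0 <= s ord0 l) ->
  face_spread s = 0 \/
  exists2 l, l != k & face_spread s <= d%:R * (`|v ord0 l| * s ord0 l).
Proof.
move=> s0; case: (pickP (fun l => l != k)) => [l0 l0k|none]; last first.
  by left; rewrite /face_spread big_pred0.
right; pose F l := `|v ord0 l| * s ord0 l.
have [l lk lmax] := @arg_maxP _ _ _ l0 [pred j | j != k] F l0k.
exists l => //; apply: (@le_trans _ _ (\sum_(j < d | j != k) F l)).
  by apply: ler_sum => j; exact: lmax.
apply: (@le_trans _ _ (\sum_(j < d) F l)); last by rewrite sumr_const card_ord mulr_natl.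
rewrite [leRHS](bigID (fun j => j != k)) /= lerDl.
by apply: sumr_ge0 => j _; rewrite mulr_ge0.
Qed.

Lemma slab_box_coord_near (p q x : V) : (slab v a b `&` box p q) x ->
  `|v ord0 k| * `|x ord0 k - slab_centre p q| <= (b - a + face_spread (q - p)) / 2.
Proof.
move=> [/andP[ax xb] xpq].
pose c l := (p ord0 l + q ord0 l) / 2.
pose dev := \sum_(l < d | l != k) v ord0 l * (x ord0 l - c l).
have dev_le : `|dev| <= face_spread (q - p) / 2.
  apply: le_trans (ler_norm_sum _ _ _) _.
  rewrite /face_spread mulr_suml; apply: ler_sum => l _.
  rewrite normrM !mxE -mulrA ler_wpM2l //.
  have /andP[? ?] := xpq l; rewrite ler_norml /c; apply/andP; split; lra.
have devE : dev = \sum_(l < d | l != k) v ord0 l * x ord0 l -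
                  \sum_(l < d | l != k) v ord0 l * c l.
  by rewrite -sumrB; apply: eq_bigr => l _; rewrite mulrBr.
have centreE : v ord0 k * (x ord0 k - slab_centre p q) = dotv v x - (a + b) / 2 - dev.
  rewrite devE /dotv (bigD1 k) //= mulrBr /slab_centre [v ord0 k * (_ / _)]mulrC divfK //.
  by rewrite -/(c _); ring.
rewrite -normrM centreE; apply: le_trans (ler_normB _ _) _.
have : `|dotv v x - (a + b) / 2| <= (b - a) / 2.
  by rewrite ler_norml; apply/andP; split; lra.
lra.
Qed.

Lemma slab_box_bound1 : slab_box_bound 1.
Proof.
move=> p q pq; set t := slab_centre p q; set s := q - p.
have s_ge0 l : 0 <= s ord0 l by rewrite !mxE subr_ge0.
set ell := (b - a + face_spread s) / (2 * `|v ord0 k|).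
have ell_ge0 : 0 <= ell.
  apply: divr_ge0; last by rewrite mulr_ge0 // ltW.
  by rewrite addr_ge0 ?subr_ge0 // face_spread_ge0.
have le_ends l : set_coord p k (t - ell) ord0 l <= set_coord q k (t + ell) ord0 l.
  by rewrite !mxE; case: ifP => _; [lra|exact: pq].
set box' := box (set_coord p k (t - ell)) (set_coord q k (t + ell)).
have sub : slab v a b `&` box p q `<=` box'.
  move=> x hx j; rewrite !mxE; case: eqVneq => [->|_]; last by case: hx => _ /(_ j).
  rewrite -ler_distl /ell invfM mulrA ler_pdivlMr // mulrC.
  exact: slab_box_coord_near.
apply: (@le_trans _ _ (lam box')).
  apply: le_measure sub; rewrite inE; last exact: measurable_box.
  by apply: measurableI; [exact: measurable_slab|exact: measurable_box].
rewrite lebesgue_box_sides // set_coordB (prod_set_coord xpredT) // lee_fin.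
rewrite -/(face_volume s) mul1r /ell.
by rewrite le_eqVlt; apply/orP; left; apply/eqP; field; rewrite gt_eqF.
Qed.

Lemma slab_box_bound_halve th : 0 <= th -> slab_box_bound th ->
  slab_box_bound (th * shrink).
Proof.
move=> th_ge0 hth p q pq; set s := q - p.
have s_ge0 l : 0 <= s ord0 l by rewrite !mxE subr_ge0.
have [E0|[l lk E_le]] := @face_spread_max s s_ge0.
  by apply: le_trans (hth p q pq) _; rewrite -/s E0 !mulr0.
pose m := (p ord0 l + q ord0 l) / 2.
have [pm mq] : p ord0 l <= m /\ m <= q ord0 l by have := pq l; rewrite /m; split; lra.
have le_lo j : p ord0 j <= set_coord q l m ord0 j by rewrite mxE; case: ifP => [/eqP->|].
have le_hi j : set_coord p l m ord0 j <= q ord0 j by rewrite mxE; case: ifP => [/eqP->|].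
have halfE : m - p ord0 l = s ord0 l / 2 /\ q ord0 l - m = s ord0 l / 2.
  by rewrite !mxE /m; split; field.
have lo_sides : set_coord q l m - p = set_coord s l (s ord0 l / 2).
  by rewrite -{1}(set_coord_id p l) set_coordB halfE.1.
have hi_sides : q - set_coord p l m = set_coord s l (s ord0 l / 2).
  by rewrite -{1}(set_coord_id q l) set_coordB halfE.2.
have mSB (p' q' : V) : measurable (slab v a b `&` box p' q').
  by apply: measurableI; [exact: measurable_slab|exact: measurable_box].
have sub : slab v a b `&` box p q `<=`
    (slab v a b `&` box p (set_coord q l m)) `|` (slab v a b `&` box (set_coord p l m) q).
  by move=> x [sx /(box_split l m)[]]; [left|right].
apply: le_trans (le_measure _ _ _ sub) _; rewrite ?inE; [exact: mSB|exact: measurableU|].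
apply: le_trans (measureU2 _ (mSB _ _) (mSB _ _)) _.
apply: le_trans (leeD (hth _ _ le_lo) (hth _ _ le_hi)) _.
rewrite lo_sides hi_sides face_volume_halve // face_spread_halve // -EFinD lee_fin.
set F := `|v ord0 l| * s ord0 l; set E := face_spread s.
have d_pos : (0 : R) < d%:R by rewrite ltr0n.
have spread_le : E - F / 2 <= shrink * E.
  rewrite /shrink mulrBl mul1r lerD2l lerN2 mulrC ler_pdivrMr ?mulr_gt0 //.
  by rewrite (_ : F / 2 * (2 * d%:R) = d%:R * F) //; field.
have -> : face_volume s / 2 * (b - a + th * (E - F / 2)) / `|v ord0 k| +
    face_volume s / 2 * (b - a + th * (E - F / 2)) / `|v ord0 k| =
    face_volume s * (b - a + th * (E - F / 2)) / `|v ord0 k|.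
  by field; rewrite gt_eqF.
apply: ler_wpM2r; first by rewrite invr_ge0 ltW.
apply: ler_wpM2l; first exact: face_volume_ge0.
by rewrite lerD2l -[leRHS]mulrA ler_wpM2l.
Qed.

Lemma slab_box_bound_pow n : slab_box_bound (shrink ^+ n).
Proof.
elim: n => [|n IH]; first exact: slab_box_bound1.
by rewrite exprSr; apply: slab_box_bound_halve => //; exact: exprn_ge0.
Qed.

Lemma lebesgue_slab_box (p q : V) : (forall l, p ord0 l <= q ord0 l) ->
  (lam (slab v a b `&` box p q) <= (face_volume (q - p) * (b - a) / `|v ord0 k|)%:E)%E.
Proof.
move=> pq; set s := q - p.
pose u n := face_volume s * (b - a + shrink ^+ n * face_spread s) / `|v ord0 k|.
have u_cvg : u n @[n --> \oo] --> face_volume s * (b - a) / `|v ord0 k|.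
  rewrite -[in X in _ --> X](addr0 (b - a)) -(mul0r (face_spread s)).
  apply: cvgMr_tmp; apply: cvgMl_tmp; apply: cvgD; first exact: cvg_cst.
  by apply: cvgMr_tmp; apply: cvg_expr; rewrite ger0_norm.
have lam_fin : lam (slab v a b `&` box p q) \is a fin_num.
  rewrite ge0_fin_numE //; apply: le_lt_trans (slab_box_bound_pow 0 _ _ pq) _.
  exact: ltry.
rewrite -(fineK lam_fin) lee_fin -(cvg_lim _ u_cvg) //.
apply: limr_ge; first by apply/cvg_ex; eexists; exact: u_cvg.
by apply: nearW => n; rewrite -lee_fin fineK //; exact: slab_box_bound_pow.
Qed.

End slab_in_box.

Lemma lebesgue_slab_cube {R : realType} {d : nat}
    (lam : {measure set 'rV[R]_d -> \bar R}) {v : 'rV[R]_d} {k : 'I_d} {a w r : R} :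
  is_lebesgue lam -> v ord0 k != 0 -> 0 <= w -> 0 <= r ->
  (lam (slab v a (a + w) `&` cube r) <= ((2 * r) ^+ d.-1 * w / `|v ord0 k|)%:E)%E.
Proof.
move=> lam_box vk w_ge0 r_ge0.
have le_cube l : (const_mx (- r) : 'rV[R]_d) ord0 l <= (const_mx r : 'rV[R]_d) ord0 l.
  by rewrite !mxE; lra.
apply: le_trans (@lebesgue_slab_box _ _ lam lam_box v k a (a + w) vk _ _ _ le_cube) _.
  lra.
rewrite lee_fin addrAC subrr add0r (_ : face_volume _ _ = (2 * r) ^+ d.-1) //.
rewrite /face_volume (eq_bigr (fun=> 2 * r)) => [|l _]; last first.
  by rewrite !mxE opprK -mulr2n mulr_natl.
by rewrite prodr_const cardC1 card_ord.
Qed.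

Section density_on_shells.
Context {R : realType} {d : nat}.
Local Notation V := 'rV[R]_d.
Variables (lam : {measure set V -> \bar R}) (f : V -> R) (Rr : R).
Hypothesis mf : measurable_fun [set: V] f.
Hypothesis f_ge0 : forall x, 0 <= f x.
Hypothesis Rr_gt1 : 1 < Rr.

Local Notation shell_sup r := (sup_fun (f_piece f Rr r)).

Definition shell_series : \bar R :=
  \sum_(0 <= r <oo) (((Rr + r%:R) ^+ d.-1)%:E * shell_sup r).

Hypothesis shell_series_lty : (shell_series < +oo)%E.

Lemma shell_radius_gt0 (r : nat) : 0 < Rr + r%:R.
Proof. by apply: ltr_wpDr; [exact: ler0n|exact: lt_trans Rr_gt1]. Qed.

Lemma f_piece_ge0 r x : 0 <= f_piece f Rr r x.
Proof. by rewrite /f_piece; case: ifP => _; case: ifP. Qed.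

Lemma f_piece_le_sup r x : ((f_piece f Rr r x)%:E <= shell_sup r)%E.
Proof. by apply: ereal_sup_ubound; exists x. Qed.

Lemma shell_sup_ge0 r : (0 <= shell_sup r)%E.
Proof. by apply: le_trans (f_piece_le_sup r 0); rewrite lee_fin f_piece_ge0. Qed.

Lemma shell_term_ge0 r : (0 <= ((Rr + r%:R) ^+ d.-1)%:E * shell_sup r)%E.
Proof. by rewrite mule_ge0 ?shell_sup_ge0 // lee_fin exprn_ge0 // ltW // shell_radius_gt0. Qed.

Lemma shell_sup_fin r : shell_sup r \is a fin_num.
Proof.
rewrite ge0_fin_numE ?shell_sup_ge0 // ltNge leye_eq; apply/negP => /eqP sup_oo.
have : (((Rr + r%:R) ^+ d.-1)%:E * shell_sup r < +oo)%E.
  apply: le_lt_trans shell_series_lty; apply: le_trans (nneseries_lim_ge r.+1 _); last first.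
    by move=> n _ _; exact: shell_term_ge0.
  by rewrite big_nat_recr //= leeDr // sume_ge0 // => n _; exact: shell_term_ge0.
by rewrite sup_oo gt0_muley ?lte_fin ?exprn_gt0 ?shell_radius_gt0 // ltxx.
Qed.

Lemma shell_series_fin : shell_series \is a fin_num.
Proof.
by rewrite ge0_fin_numE // nneseries_ge0 // => n _ _; exact: shell_term_ge0.
Qed.

Lemma f_le_shell_sup x :
  exists r, ((f x)%:E <= shell_sup r)%E /\ cube (Rr + r%:R) x.
Proof.
have piece_le r : f_piece f Rr r x = f x -> ((f x)%:E <= shell_sup r)%E.
  by move=> <-; exact: f_piece_le_sup.
have [x_le|x_gt] := lerP (enorm x) Rr.
  exists 0%N; split; last by apply: enorm_le_cube; rewrite addr0.
  by apply: piece_le; rewrite /f_piece eqxx x_le.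
have [n x_le n_min] : exists2 n, enorm x <= Rr + n%:R &
    forall m, enorm x <= Rr + m%:R -> (n <= m)%N.
  have exP : exists n, enorm x <= Rr + n%:R.
    exists (Num.Def.archi_bound (enorm x)).
    have := archi_boundP (enorm_ge0 x); have := Rr_gt1; lra.
  by case: (ex_minnP exP) => n; exists n.
exists n; split; last exact: enorm_le_cube.
apply: piece_le; case: n x_le n_min => [|n] x_le n_min; first by rewrite addr0 in x_le; lra.
rewrite /f_piece /= x_le andbT ifT //.
have [x_le'|] := lerP (enorm x) (Rr + n%:R); first by have := n_min _ x_le'; rewrite ltnn.
by rewrite -natr1; lra.
Qed.

Lemma dmeasure_le_shell_series (S : set V) (B : R) : measurable S -> 0 <= B ->
  (forall r, (lam (S `&` cube (Rr + r%:R)) <= (B * (Rr + r%:R) ^+ d.-1)%:E)%E) ->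
  (dmeasure lam f S <= (B * fine shell_series)%:E)%E.
Proof.
move=> mS B_ge0 S_cube.
pose h r (x : V) := (fine (shell_sup r) * \1_(cube (Rr + r%:R)) x)%:E.
have h_ge0 r x : (0 <= h r x)%E.
  by rewrite lee_fin mulr_ge0 ?fine_ge0 ?shell_sup_ge0.
have mh r : measurable_fun S (h r).
  apply/measurable_EFinP; apply: measurable_funM => //.
  by apply: measurable_indic; exact: measurable_box.
apply: (@le_trans _ _ (\int[lam]_(x in S) \sum_(0 <= r <oo) h r x)%E).
  apply: ge0_le_integral => //.
  - by move=> x _; rewrite lee_fin.
  - by apply/measurable_EFinP; exact: measurable_funS mf.
  - apply: (@ge0_emeasurable_sum _ _ _ _ h xpredT) => [r x _ _|r _]; first exact: h_ge0.
    exact: mh.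
  move=> x _; have [r [fx_le x_cube]] := f_le_shell_sup x.
  apply: le_trans (nneseries_lim_ge r.+1 _) => [|n _ _]; last exact: h_ge0.
  rewrite big_nat_recr //= -[leLHS]add0e leeD ?sume_ge0 //.
  by rewrite /h indicE mem_set // mulr1 fineK // shell_sup_fin.
rewrite (integral_nneseries _ mS mh) => [|n x _]; last exact: h_ge0.
rewrite EFinM fineK ?shell_series_fin // -nneseriesZl => [|n _]; last exact: shell_term_ge0.
apply: lee_nneseries => [n _ _|r _]; first exact: integral_ge0.
have m_cube : measurable (cube (Rr + r%:R) : set V) by exact: measurable_box.
rewrite /h (integralZl_indic _ (fun=> cube (Rr + r%:R))) //; last first.
  by rewrite ltNge fine_ge0 ?shell_sup_ge0.
rewrite integral_indic // setIC fineK ?shell_sup_fin //.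
apply: le_trans (lee_wpmul2l (shell_sup_ge0 r) (S_cube r)) _.
by rewrite EFinM muleCA [(shell_sup r * _)%E]muleC.
Qed.

End density_on_shells.

Lemma content_le_sum_cover {dT : measure_display} {T : semiRingOfSetsType dT}
    {R : realFieldType} (mu : {content set T -> \bar R}) n (A : set T)
    (F : 'I_n -> set T) :
  measurable A -> (forall j, measurable (F j)) -> A `<=` \bigcup_j F j ->
  (mu A <= \sum_(j < n) mu (F j))%E.
Proof.
move=> mA mF AF; apply: le_trans (content_sub_fsum _ _ _ mA AF) _ => //.
  exact: finite_finset.
rewrite (fsbigE (index_enum 'I_n)) ?index_enum_uniq // => [|j _]; last first.
  by rewrite mem_index_enum.
by under eq_bigl do rewrite in_setT.
Qed.

Lemma ler_supnorm {R : realType} {M : nat} (g : 'I_M -> R) j : `|g j| <= supnorm g.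
Proof. exact: le_bigmax. Qed.

Lemma supnorm_ge0 {R : realType} {M : nat} (g : 'I_M -> R) : 0 <= supnorm g.
Proof. by apply: (big_ind (>= 0)) => // x z x_ge0 _; rewrite le_max x_ge0. Qed.

Definition inv_pivot {R : realType} {d : nat} (v : 'rV[R]_d) : R :=
  if [pick l | v ord0 l != 0] is Some l then `|v ord0 l|^-1 else 0.

Lemma inv_pivot_ge0 {R : realType} {d : nat} (v : 'rV[R]_d) : 0 <= inv_pivot v.
Proof. by rewrite /inv_pivot; case: pickP => // l _; rewrite invr_ge0. Qed.

Section laguerre_cells.
Context {R : realType} {d M : nat}.
Local Notation V := 'rV[R]_d.
Variable y : 'I_M -> V.

Definition cost_shift (p q : V) : R := (enorm p ^+ 2 - enorm q ^+ 2) / 2.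

Lemma cost_diff (x p q : V) : cost x p - cost x q = dotv (q - p) x + cost_shift p q.
Proof.
rewrite /cost /cost_shift /dotv !enorm_sqr -!mulrBl -!sumrB !mulr_suml -big_split /=.
by apply: eq_bigr => l _; rewrite !mxE; field.
Qed.

Lemma laguerreP g i x :
  laguerre y g i x <-> forall j, cost x (y i) - g i <= cost x (y j) - g j.
Proof.
rewrite /laguerre /ctransform /=; split => [xi j|xi].
  by rewrite -lee_fin -xi; exact: (@bigmin_le _ _ _ +oo%E j (fun j => _%:E)).
apply/eqP; rewrite eq_le (@bigmin_le _ _ _ +oo%E i (fun j => _%:E)) /=.
by apply: le_bigmin => [|j _]; rewrite ?leey ?lee_fin.
Qed.

Lemma measurable_laguerre g i : measurable (laguerre y g i).
Proof.
have -> : laguerre y g i = \bigcap_(j in [set: 'I_M])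
    ([set: V] `&` dotv (y j - y i) @^-1` `]-oo, g i - g j - cost_shift (y i) (y j)]).
  apply/seteqP; split => x.
    move/laguerreP => xi j _; split => //=; rewrite in_itv /=.
    by have := xi j; have := cost_diff x (y i) (y j); lra.
  move=> xi; apply/laguerreP => j; have [_] := xi j I; rewrite /= in_itv /=.
  by have := cost_diff x (y i) (y j); lra.
apply: fin_bigcap_measurable; first exact: finite_finset.
by move=> j _; apply: measurable_dotv => //; exact: measurable_itv.
Qed.

Definition switch_slab (g g' : 'I_M -> R) (i j : 'I_M) : set V :=
  let s := cost_shift (y i) (y j) in slab (y j - y i) (g' i - g' j - s) (g i - g j - s).

Lemma laguerre_diff_sub_switch g g' i :
  laguerre y g i `\` laguerre y g' i `<=` \bigcup_j switch_slab g g' i j.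
Proof.
move=> x [/laguerreP xi /laguerreP]; rewrite -existsNP => -[j /negP]; rewrite -ltNge => xj.
exists j => //; rewrite /switch_slab /slab /=.
move: (xi j) (cost_diff x (y i) (y j)) => xij e; apply/andP; split; lra.
Qed.

Lemma switch_slab_sub g g' i j :
  let a := g' i - g' j - cost_shift (y i) (y j) in
  switch_slab g g' i j `<=` slab (y j - y i) a (a + 2 * supnorm (fun j => g j - g' j)).
Proof.
move=> a x /andP[ax xb]; apply/andP; split => //; apply: le_trans xb _.
have := ler_supnorm (fun j => g j - g' j) i; have := ler_supnorm (fun j => g j - g' j) j.
by rewrite /a !ler_norml => /andP[? ?] /andP[? ?]; lra.
Qed.

Lemma lebesgue_switch_slab_cube (lam : {measure set V -> \bar R}) g g' i j r :
  injective y -> is_lebesgue lam -> 0 <= r ->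
  (lam (switch_slab g g' i j `&` cube r) <=
     (2 ^+ d * inv_pivot (y j - y i) * supnorm (fun j => g j - g' j) * r ^+ d.-1)%:E)%E.
Proof.
move=> y_inj lam_box r_ge0; rewrite /inv_pivot; case: pickP => [l yl|y_eq]; last first.
  have -> : j = i.
    apply: y_inj; apply/rowP => l; apply/eqP; rewrite -subr_eq0.
    by have := y_eq l; rewrite /= !mxE => /negbFE.
  have -> : switch_slab g g' i i = set0 by apply/seteqP; split => x // /andP[]; lra.
  by rewrite set0I measure0 mulr0 !mul0r.
have eps_ge0 := supnorm_ge0 (fun j => g j - g' j).
have d_gt0 : (0 < d)%N := leq_ltn_trans (leq0n l) (ltn_ord l).
apply: le_trans (le_measure _ _ _ (@setSI _ (cube r) _ _ (switch_slab_sub g g' i j))) _.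
- by rewrite inE; apply: measurableI; [exact: measurable_slab|exact: measurable_box].
- by rewrite inE; apply: measurableI; [exact: measurable_slab|exact: measurable_box].
apply: le_trans (lebesgue_slab_cube lam lam_box yl _ r_ge0) _; first by rewrite mulr_ge0.
have pow2E : 2 ^+ d = 2 * 2 ^+ d.-1 :> R by rewrite -exprS prednK.
rewrite lee_fin le_eqVlt; apply/orP; left; apply/eqP.
by rewrite pow2E exprMn; field; rewrite normr_eq0.
Qed.

Lemma lebesgue_laguerre_diff_cube (lam : {measure set V -> \bar R}) g g' i r :
  injective y -> is_lebesgue lam -> 0 <= r ->
  (lam ((laguerre y g i `\` laguerre y g' i) `&` cube r) <=
     (2 ^+ d * (\sum_(j < M) inv_pivot (y j - y i)) * supnorm (fun j => g j - g' j) *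
      r ^+ d.-1)%:E)%E.
Proof.
move=> y_inj lam_box r_ge0.
have m_cube : measurable (cube r : set V) by exact: measurable_box.
have cover : (lam ((laguerre y g i `\` laguerre y g' i) `&` cube r) <=
    \sum_(j < M) lam (switch_slab g g' i j `&` cube r))%E.
  apply: content_le_sum_cover.
  - by apply: measurableI => //; apply: measurableD; exact: measurable_laguerre.
  - by move=> j; apply: measurableI => //; exact: measurable_slab.
  - by move=> x [/laguerre_diff_sub_switch [j _ xj] xr]; exists j.
apply: (le_trans cover).
have slab_le j := lebesgue_switch_slab_cube lam g g' i j r y_inj lam_box r_ge0.
apply: le_trans (lee_sum _ (fun j _ => slab_le j)) _.
by rewrite sumEFin lee_fin mulr_sumr !mulr_suml.
Qed.

End laguerre_cells.

Lemma dmeasure_laguerre_diff {R : realType} {d M : nat} {y : 'I_M -> 'rV[R]_d}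
    {lam : {measure set 'rV[R]_d -> \bar R}} {f : 'rV[R]_d -> R} {Rr : R} g g' i :
  injective y -> is_lebesgue lam -> measurable_fun [set: 'rV[R]_d] f ->
  (forall x, 0 <= f x) -> 1 < Rr -> (shell_series f Rr < +oo)%E ->
  (dmeasure lam f (laguerre y g i `\` laguerre y g' i) <=
     (2 ^+ d * (\sum_(j < M) inv_pivot (y j - y i)) * supnorm (fun j => g j - g' j) *
      fine (shell_series f Rr))%:E)%E.
Proof.
move=> y_inj lam_box mf f_ge0 Rr_gt1 series_lty.
apply: (dmeasure_le_shell_series _ _ _ mf f_ge0 Rr_gt1 series_lty) => [||r].
- by apply: measurableD; exact: measurable_laguerre.
- by rewrite !mulr_ge0 ?exprn_ge0 ?supnorm_ge0 ?sumr_ge0 // => j _; exact: inv_pivot_ge0.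
- exact: (lebesgue_laguerre_diff_cube _ _ _ _ _ _ y_inj lam_box
    (ltW (shell_radius_gt0 _ Rr_gt1 r))).
Qed.

Theorem lemmaB13 (R : realType) (d M : nat)
  (y : 'I_M -> 'rV[R]_d) (w : 'I_M -> R)
  (lam : {measure set 'rV[R]_d -> \bar R}) (f : 'rV[R]_d -> R) :
  (* nu = sum_i w_i delta_{y_i}: distinct points, positive weights summing to 1 *)
  injective y -> (forall i, 0 < w i) -> \sum_(i < M) w i = 1 ->
  (* lam is Lebesgue measure on R^d; mu has density f w.r.t. lam *)
  is_lebesgue lam -> is_density lam f ->
  (* (B1): quadratic cost (built into [laguerre]) and finite second moment *)
  (\int[lam]_(x in [set: 'rV[R]_d]) ((enorm x) ^+ 2 * f x)%:E < +oo)%E ->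
  (* (B2) *)
  (exists K : set 'rV[R]_d, compact K /\
     (dmeasure lam f K >= (1 - wmin w / 4)%:E)%E /\ PW_restricted lam f K) ->
  (* (B3) *)
  (exists Rr : R, 1 < Rr /\ exists C : R, 0 < C /\
     exists om : R -> R, is_modulus om /\
     (forall delta : R, 0 < delta ->
        (\sum_(0 <= r <oo) (((Rr + r%:R) ^+ d.-1)%:E * modcont (f_piece f Rr r) delta)
           <= (C * om delta)%:E)%E) /\
     (\sum_(0 <= r <oo) (((Rr + r%:R) ^+ d.-1)%:E * sup_fun (f_piece f Rr r)) < +oo)%E) ->
  exists C : R, 0 < C /\
    forall (g g' : 'I_M -> R) (i : 'I_M),
      (dmeasure lam f (laguerre y g i `\` laguerre y g' i)
         <= (C * M%:R * supnorm (fun j => g j - g' j))%:E)%E.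
Proof.
move=> y_inj _ _ lam_box [mf [f_ge0 _]] _ _ [Rr [Rr_gt1 [_ [_ [_ [_ [_ series_lty]]]]]]].
pose G i := \sum_(j < M) inv_pivot (y j - y i).
have G_ge0 i : 0 <= G i by apply: sumr_ge0 => j _; exact: inv_pivot_ge0.
pose K := 2 ^+ d * fine (shell_series f Rr).
have K_ge0 : 0 <= K.
  by rewrite mulr_ge0 ?exprn_ge0 // fine_ge0 // nneseries_ge0 // => *; exact: shell_term_ge0.
exists (1 + K * \sum_i G i); split => [|g g' i].
  by rewrite ltr_pwDl // mulr_ge0 // sumr_ge0.
apply: le_trans (dmeasure_laguerre_diff g g' i y_inj lam_box mf f_ge0 Rr_gt1 series_lty) _.
set eps := supnorm _; have eps_ge0 : 0 <= eps := supnorm_ge0 _.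
have G_le : G i <= \sum_i G i by rewrite (bigD1 i) //= lerDl sumr_ge0.
have M_ge1 : 1 <= M%:R :> R by rewrite ler1n (leq_ltn_trans (leq0n i) (ltn_ord i)).
have -> : 2 ^+ d * G i * eps * fine (shell_series f Rr) = K * G i * eps by rewrite /K; ring.
rewrite lee_fin; apply: (@le_trans _ _ ((1 + K * \sum_i G i) * eps)).
  by rewrite ler_wpM2r // -[leLHS]add0r lerD // ler_wpM2l.
by rewrite ler_wpM2r // ler_peMr // addr_ge0 // mulr_ge0 // sumr_ge0.
Qed.
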